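(* Let $\mathcal H$ be a separable complex Hilbert space, $A\in L(\mathcal H)^+$, $\mathcal S\subseteq\mathcal H$ a closed subspace, and let $T\in L(\mathcal H)$ satisfy $R(T)\subseteq\mathcal S$. The following are equivalent: (1) $T$ is an $A$-projection into $\mathcal S$; (2) $AT=T^*A$ and $ATP_{\mathcal S}=AP_{\mathcal S}$; (3) $P_{\mathcal S}AT=P_{\mathcal S}A$.
   Context: $L(\mathcal H)$ denotes bounded linear operators on $\mathcal H$, $L(\mathcal H)^+$ the positive (semidefinite) ones, $R(\cdot)$ the range, and $P_{\mathcal S}$ the orthogonal projection onto $\mathcal S$. For $A\in L(\mathcal H)^+$, $\|x\|_A=\langle Ax,x\rangle^{1/2}$. An operator $T\in L(\mathcal H)$ is an $A$-projection into $\mathcal S$ if $R(T)\subseteq\mathcal S$ and $\|y-Ty\|_A\le\|y-s\|_A$ for all $y\in\mathcal H$ and all $s\in\mathcal S$. *)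

(* A separable complex Hilbert space is encoded as a
   left module V over the complex numbers C := R[i] (R : realType) with an
   inner product (linear in the first argument, conjugate-symmetric,
   positive definite), complete for the induced norm. *)
From HB Require Import structures.
From mathcomp Require Import all_boot all_order all_algebra.
From mathcomp Require Import complex reals.
Set Implicit Arguments. Unset Strict Implicit. Unset Printing Implicit Defensive.
Import Order.TTheory GRing.Theory Num.Theory.
Local Open Scope ring_scope.

Section HilbertDefs.
Variable R : realType.
Variable V : lmodType R[i].
Variable inner : V -> V -> R[i].

Definition hnorm (x : V) : R[i] := sqrtC (inner x x).

Definition inner_product_axioms : Prop :=
  [/\ (forall (a : R[i]) (x y z : V), inner (a *: x + y) z = a * inner x z + inner y z),
      (forall x y : V, inner y x = (inner x y)^*),
      (forall x : V, 0 <= inner x x) &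
      (forall x : V, inner x x = 0 -> x = 0)].

Definition cvg_to (u : nat -> V) (l : V) : Prop :=
  forall eps : R[i], 0 < eps -> exists N : nat, forall n, (N <= n)%N -> hnorm (u n - l) < eps.

Definition cauchy_seq (u : nat -> V) : Prop :=
  forall eps : R[i], 0 < eps -> exists N : nat, forall m n, (N <= m)%N -> (N <= n)%N ->
    hnorm (u m - u n) < eps.

Definition complete_space : Prop :=
  forall u : nat -> V, cauchy_seq u -> exists l, cvg_to u l.

Definition hilbert_space : Prop := inner_product_axioms /\ complete_space.

Definition separable : Prop :=
  exists d : nat -> V, forall (x : V) (eps : R[i]), 0 < eps -> exists n, hnorm (x - d n) < eps.

Definition bounded_op (T : V -> V) : Prop :=
  (forall (a : R[i]) (x y : V), T (a *: x + y) = a *: T x + T y) /\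
  exists M : R[i], 0 <= M /\ forall x, hnorm (T x) <= M * hnorm x.

Definition positive_op (A : V -> V) : Prop :=
  bounded_op A /\ forall x, 0 <= inner (A x) x.

Definition closed_subspace (S : V -> Prop) : Prop :=
  [/\ S 0,
      (forall (a : R[i]) x y, S x -> S y -> S (a *: x + y)) &
      (forall (u : nat -> V) l, (forall n, S (u n)) -> cvg_to u l -> S l)].

Definition orth_proj (S : V -> Prop) (P : V -> V) : Prop :=
  (forall x, S (P x)) /\ (forall x s, S s -> inner (x - P x) s = 0).

Definition adjoint (T Ts : V -> V) : Prop :=
  forall x y, inner (T x) y = inner x (Ts y).

Definition Anorm (A : V -> V) (x : V) : R[i] := sqrtC (inner (A x) x).

Definition A_projection (A : V -> V) (S : V -> Prop) (T : V -> V) : Prop :=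
  (forall y, S (T y)) /\
  (forall y s, S s -> Anorm A (y - T y) <= Anorm A (y - s)).

End HilbertDefs.

From HB Require Import structures.
From mathcomp Require Import all_boot all_order all_algebra.
From mathcomp Require Import complex reals ring.
Import Order.TTheory GRing.Theory Num.Theory.
Set Implicit Arguments. Unset Strict Implicit.
Local Open Scope ring_scope.

(* A positive operator on a complex inner product space is self-adjoint
   (polarization), so ||y - s||_A^2 expands like a Hilbert norm. Splitting
   y - s = (y - Ty) + (Ty - s), T is an A-projection into S iff the residual
   y - Ty is A-orthogonal to S: minimizing the quadratic ||u + k s||_A^2 in the
   scalar k forces the cross term <A u, s> to vanish, and conversely the cross
   term vanishing gives Pythagoras. This orthogonality is exactly
   P_S A T = P_S A; it also makes AT self-adjoint, which turns it into
   AT = T^* A together with A T P_S = A P_S. *)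

Section LinearFun.
Variables (K : pzRingType) (U W : lmodType K) (f : U -> W).
Hypothesis f_lin : linear f.

Lemma lin_fun0 : f 0 = 0.
Proof. by have := f_lin (-1) 0 0; rewrite scaler0 addr0 scaleN1r addNr. Qed.

Lemma lin_funD x y : f (x + y) = f x + f y.
Proof. by rewrite -[x]scale1r f_lin !scale1r. Qed.

Lemma lin_funZ a x : f (a *: x) = a *: f x.
Proof. by rewrite -[a *: x]addr0 f_lin lin_fun0 addr0. Qed.

Lemma lin_funB x y : f (x - y) = f x - f y.
Proof. by rewrite lin_funD -scaleN1r lin_funZ scaleN1r. Qed.

End LinearFun.

Lemma quadratic_ge0_eq0 (C : numClosedFieldType) (a c : C) :
  0 <= a -> (forall k, 0 <= k^* * c + k * c^* + k * k^* * a) -> c = 0.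
Proof.
move=> a_ge0 quad_ge0.
have a1_gt0 : 0 < a + 1 by rewrite ltr_wpDl.
have a2_gt0 : 0 < a + 2 by rewrite ltr_wpDl.
(* At k = -c/(a+1) the form equals -|c|^2 (a+2) / (a+1)^2. *)
have := quad_ge0 (- c / (a + 1)).
rewrite (_ : _ + _ = - (c * c^*) * (a + 2) * ((a + 1) ^+ 2)^-1); last first.
  rewrite rmorphM rmorphN fmorphV /= rmorphD rmorph1 /= (geC0_conj a_ge0).
  by field; rewrite lt0r_neq0.
rewrite pmulr_lge0 ?invr_gt0 ?exprn_gt0 // pmulr_lge0 // oppr_ge0 => cc_le0.
by apply/eqP; rewrite -mul_conjC_eq0 eq_le cc_le0 mul_conjC_ge0.
Qed.

Section InnerProduct.
Variables (C : numClosedFieldType) (V : lmodType C) (inner : V -> V -> C).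
Hypothesis inner_linear : forall z, linear (inner^~ z : V -> C^o).
Hypothesis innerC : forall x y, inner y x = (inner x y)^*.
Hypothesis inner_def : forall x, inner x x = 0 -> x = 0.

Lemma innerDl x y z : inner (x + y) z = inner x z + inner y z.
Proof. exact: (lin_funD (inner_linear z)). Qed.

Lemma innerZl a x z : inner (a *: x) z = a * inner x z.
Proof. exact: (lin_funZ (inner_linear z)). Qed.

Lemma innerBl x y z : inner (x - y) z = inner x z - inner y z.
Proof. exact: (lin_funB (inner_linear z)). Qed.

Lemma innerDr x y z : inner z (x + y) = inner z x + inner z y.
Proof. by rewrite innerC innerDl rmorphD /= -!innerC. Qed.

Lemma innerZr a x z : inner z (a *: x) = a^* * inner z x.
Proof. by rewrite innerC innerZl rmorphM /= -innerC. Qed.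

Lemma inner_ext x y : (forall z, inner x z = inner y z) -> x = y.
Proof.
move=> exy; apply/eqP; rewrite -subr_eq0; apply/eqP/inner_def.
by rewrite innerBl exy subrr.
Qed.

Section PositiveOperator.
Variable A : V -> V.
Hypothesis A_lin : linear A.
Hypothesis A_ge0 : forall x, 0 <= inner (A x) x.

Lemma AformD x y :
  inner (A (x + y)) (x + y) =
  inner (A x) x + inner (A x) y + inner (A y) x + inner (A y) y.
Proof. by rewrite (lin_funD A_lin) !(innerDl, innerDr) !addrA. Qed.

Lemma A_selfadjoint x y : inner (A x) y = inner x (A y).
Proof.
have cross_real y' :
    (inner (A x) y' + inner (A y') x)^* = inner (A x) y' + inner (A y') x.
  have /eqP := geC0_conj (A_ge0 (x + y')).
  rewrite AformD !rmorphD /= !(geC0_conj (A_ge0 _)) -subr_eq0 => /eqP e.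
  by apply/eqP; rewrite -subr_eq0; apply/eqP; rewrite -e; ring.
(* Realness at y' = y and y' = i y gives two linear equations in a, b. *)
rewrite (innerC (A y)); set a := inner (A x) y; set b := inner (A y) x.
have /eqP e1 := cross_real y; rewrite rmorphD /= -subr_eq0 in e1.
have /eqP ei := cross_real ('i *: y).
rewrite (lin_funZ A_lin) innerZl innerZr rmorphD !rmorphM /= conjCK conjCi in ei.
rewrite -/a -/b -subr_eq0 in ei.
have e2 : a^* - b^* + a - b = 0.
  apply/eqP; rewrite -(mulrI_eq0 _ (lregP (neq0Ci C))) -(eqP ei).
  by apply/eqP; ring.
have -> : b = a^*.
  apply/eqP; rewrite -subr_eq0; apply/eqP.
  rewrite (_ : b - a^* = - ((a^* + b^* - (a + b)) + (a^* - b^* + a - b)) / 2).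
    by rewrite (eqP e1) e2 addr0 oppr0 mul0r.
  by field.
by rewrite conjCK.
Qed.

Lemma AformD_sa x y :
  inner (A (x + y)) (x + y) =
  inner (A x) x + inner (A x) y + (inner (A x) y)^* + inner (A y) y.
Proof. by rewrite AformD (A_selfadjoint y x) (innerC (A x) y). Qed.

Section AProjection.
Variable S : V -> Prop.
Hypothesis S_lin : forall a x y, S x -> S y -> S (a *: x + y).
Variable T : V -> V.
Hypothesis T_range : forall y, S (T y).

Lemma S_sub x y : S x -> S y -> S (x - y).
Proof. by move=> Sx Sy; rewrite addrC -scaleN1r; apply: S_lin. Qed.

Definition residual_A_orth := forall y s, S s -> inner (A (y - T y)) s = 0.

Lemma residual_A_orthE :
  residual_A_orth <-> forall y s, S s -> inner (A (T y)) s = inner (A y) s.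
Proof.
rewrite /residual_A_orth; split=> orth y s Ss.
  by apply/eqP; rewrite eq_sym -subr_eq0 -innerBl -(lin_funB A_lin) orth.
by rewrite (lin_funB A_lin) innerBl orth ?subrr.
Qed.

Lemma A_best_approxP :
  (forall y s, S s -> inner (A (y - T y)) (y - T y) <= inner (A (y - s)) (y - s))
  <-> residual_A_orth.
Proof.
split=> [best y s Ss | orth y s Ss].
  apply: (quadratic_ge0_eq0 (A_ge0 s)) => k.
  have := best y _ (S_lin (- k) Ss (T_range y)).
  rewrite (_ : y - (- k *: s + T y) = (y - T y) + k *: s); last first.
    by rewrite scaleNr opprD opprK addrCA addrC.
  rewrite (AformD_sa (y - T y)) (lin_funZ A_lin) innerZl !innerZr rmorphM /= conjCK.
  rewrite (A_selfadjoint s) -(innerC (A (y - T y))) -subr_ge0.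
  by congr (0 <= _); ring.
rewrite (_ : y - s = (y - T y) + (T y - s)); last by rewrite addrA subrK.
rewrite (AformD_sa (y - T y)) (orth y _ (S_sub (T_range y) Ss)) conjC0.
by rewrite !addr0 lerDl.
Qed.

Variable PS : V -> V.
Hypothesis PS_range : forall x, S (PS x).
Hypothesis PS_orth : forall x s, S s -> inner (x - PS x) s = 0.

Lemma PS_id s : S s -> PS s = s.
Proof.
move=> Ss; apply/esym/eqP; rewrite -subr_eq0; apply/eqP/inner_def.
exact/PS_orth/S_sub.
Qed.

Lemma PS_inner x s : S s -> inner (PS x) s = inner x s.
Proof. by move=> Ss; apply/eqP; rewrite eq_sym -subr_eq0 -innerBl PS_orth. Qed.

Lemma PS_eqE x y : PS x = PS y <-> forall s, S s -> inner x s = inner y s.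
Proof.
split=> [PSxy s Ss | eq_on_S].
  by rewrite -(PS_inner x Ss) -(PS_inner y Ss) PSxy.
have SD := S_sub (PS_range x) (PS_range y).
apply/eqP; rewrite -subr_eq0; apply/eqP/inner_def.
by rewrite innerBl !PS_inner // eq_on_S // subrr.
Qed.

Lemma residual_A_orth_PS :
  residual_A_orth <-> forall x, PS (A (T x)) = PS (A x).
Proof.
apply: iff_trans residual_A_orthE _.
by split=> orth x; [apply/PS_eqE; apply: orth | apply/PS_eqE].
Qed.

Lemma AT_selfadjoint :
  residual_A_orth -> forall x z, inner (A (T x)) z = inner x (A (T z)).
Proof.
move=> /residual_A_orthE orth x z.
rewrite A_selfadjoint (innerC (A z)) -(orth z _ (T_range x)) -innerC.
by rewrite -A_selfadjoint orth // A_selfadjoint.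
Qed.

Variable Tadj : V -> V.
Hypothesis T_adj : forall x y, inner (T x) y = inner x (Tadj y).

Lemma Tadj_inner x y : inner (Tadj y) x = inner y (T x).
Proof. by rewrite innerC -T_adj -innerC. Qed.

Lemma residual_A_orth_adjointP :
  residual_A_orth <->
  (forall x, A (T x) = Tadj (A x)) /\ (forall x, A (T (PS x)) = A (PS x)).
Proof.
split=> [orth | [ATE ATPE] y s Ss].
  have ATsa := AT_selfadjoint orth; move/residual_A_orthE: orth => orth.
  split=> x; apply: inner_ext => z.
    by rewrite ATsa -A_selfadjoint Tadj_inner.
  by rewrite ATsa innerC orth ?PS_range // -innerC -A_selfadjoint.
have ATs : A (T s) = A s by have := ATPE s; rewrite !PS_id.
rewrite (lin_funB A_lin) innerBl ATE Tadj_inner.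
by rewrite (A_selfadjoint y (T s)) ATs -A_selfadjoint subrr.
Qed.

End AProjection.
End PositiveOperator.
End InnerProduct.

Lemma A_projectionE (R : realType) (V : lmodType R[i]) (inner : V -> V -> R[i])
    (A : V -> V) (S : V -> Prop) (T : V -> V) :
  (forall x, 0 <= inner (A x) x) ->
  A_projection inner A S T <->
  (forall y, S (T y)) /\
  (forall y s, S s -> inner (A (y - T y)) (y - T y) <= inner (A (y - s)) (y - s)).
Proof.
move=> A_ge0; rewrite /A_projection /Anorm.
split=> -[T_range best]; split=> // y s Ss; move: (best y s Ss);
  by rewrite ler_sqrtC ?nnegrE.
Qed.

Theorem mainTheorem1 (R : realType) (V : lmodType R[i]) (inner : V -> V -> R[i])
  (HH : hilbert_space inner) (Hsep : separable inner)
  (A : V -> V) (S : V -> Prop) (T PS Tadj : V -> V) :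
  positive_op inner A ->
  closed_subspace inner S ->
  bounded_op inner T ->
  (forall y, S (T y)) ->
  orth_proj inner S PS ->
  adjoint inner T Tadj ->
  (A_projection inner A S T <->
     ((forall x, A (T x) = Tadj (A x)) /\ (forall x, A (T (PS x)) = A (PS x)))) /\
  (A_projection inner A S T <->
     (forall x, PS (A (T x)) = PS (A x))).
Proof.
move=> [[A_lin _] A_ge0] [_ S_lin _] _ T_range [PS_range PS_orth] T_adj.
have [[innerDZl innerC _ inner_def] _] := HH.
have inner_linear z : linear (inner^~ z : V -> R[i]^o) :=
  fun a x y => innerDZl a x y z.
have best_approx := A_best_approxP inner_linear innerC A_lin A_ge0 S_lin T_range.
have Aproj : A_projection inner A S T <-> residual_A_orth inner A S T.
  apply: iff_trans (A_projectionE S T A_ge0) _.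
  by split=> [[_ /best_approx] | /best_approx].
split; apply: iff_trans Aproj _.
  exact: residual_A_orth_adjointP.
exact: residual_A_orth_PS.
Qed.
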